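(* With $H$ and the induced comodules as in the context, let $f\in F$, let $V$ be a simple right $\Bbbk^{G_f}_{\tau_f}$-comodule and $\tilde V=(V\otimes\Bbbk f)\Box_{H'_f}H$ the induced right $H$-comodule. If $\tilde V^*\cong\tilde V$, then $G_{f,f^{-1}}=\{g\in G\mid g\triangleright f=f^{-1}\}\neq\emptyset$.
   Context: Standing setup: $\Bbbk$ is an algebraically closed field of characteristic $0$, $F$ a group (possibly infinite), $G$ a finite group, and $(F,G,\triangleleft,\triangleright)$ a matched pair: $\triangleright:G\times F\to F$ a left action of $G$ on the set $F$, $\triangleleft:G\times F\to G$ a right action of $F$ on the set $G$, with $g\triangleright(ff')=(g\triangleright f)((g\triangleleft f)\triangleright f')$ and $(gg')\triangleleft f=(g\triangleleft(g'\triangleright f))(g'\triangleleft f)$. Maps $\sigma:G\times F\times F\to\Bbbk^\times$ and $\tau:G\times G\times F\to\Bbbk^\times$ satisfy: $\sigma(g;1_F,f)=\sigma(g;f,1_F)=\sigma(1_G;f,f')=1$; $\sigma(g\triangleleft f;f',f'')\sigma(g;f,f'f'')=\sigma(g;f,f')\sigma(g;ff',f'')$; $\tau(1_G,g;f)=\tau(g,1_G;f)=\tau(g,g';1_F)=1$; $\tau(g,g';g''\triangleright f)\tau(gg',g'';f)=\tau(g,g'g'';f)\tau(g',g'';f)$; and $\sigma(gg';f,f')\tau(g,g';ff')=\sigma(g;g'\triangleright f,(g'\triangleleft f)\triangleright f')\sigma(g';f,f')\tau(g,g';f)\tau(g\triangleleft(g'\triangleright f),g'\triangleleft f;f')$.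 $H=\Bbbk^G{}^\tau\#_\sigma\Bbbk F$ has basis $\{p_g\#f\}$, product $(p_g\#f)(p_{g'}\#f')=\delta_{g\triangleleft f,g'}\sigma(g;f,f')p_g\#ff'$, coproduct $\Delta(p_g\#f)=\sum_{x\in G}\tau(gx^{-1},x;f)\,p_{gx^{-1}}\#(x\triangleright f)\otimes p_x\#f$, counit $\varepsilon(p_g\#f)=\delta_{g,1_G}$, antipode $S(p_g\#f)=\sigma(g^{-1};g\triangleright f,(g\triangleright f)^{-1})^{-1}\tau(g^{-1},g;f)^{-1}p_{(g\triangleleft f)^{-1}}\#(g\triangleright f)^{-1}$. $G_f=\{g\in G\mid g\triangleright f=f\}$; $\Bbbk^{G_f}_{\tau_f}$ is the coalgebra with basis $\{p_g\}_{g\in G_f}$, $\Delta(p_g)=\sum_{x\in G_f}\tau(gx^{-1},x;f)p_{gx^{-1}}\otimes p_x$, $\varepsilon(p_g)=\delta_{g,1_G}$; $H'_f$ is the coalgebra with basis $\{p_g\#f'\mid g\in G_f,f'\in F\}$, $\Delta(p_g\#f')=\sum_{x\in G_f}\tau(gx^{-1},x;f')p_{gx^{-1}}\#(x\triangleright f')\otimes p_x\#f'$; $H$ is a left $H'_f$-comodule via $(\pi_f\otimes\mathrm{id})\Delta$ ($\pi_f$ kills $p_g\#f'$, $g\notin G_f$). $V\otimes\Bbbk f$ is a right $H'_f$-comodule via $v\otimes f\mapsto\sum_gv_g\otimes f\otimes p_g\#f$ where $\rho(v)=\sum_{g\in G_f}v_g\otimes p_g$; $\tilde V$ is the cotensor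 product with right $H$-coaction $\mathrm{id}\otimes\Delta$, and $\tilde V^*$ its dual comodule. *)

From HB Require Import structures.
From mathcomp Require Import all_boot all_order all_algebra all_fingroup.
From mathcomp Require Import boolp classical_sets fsbigop.

Set Implicit Arguments.
Unset Strict Implicit.
Unset Printing Implicit Defensive.

Import GRing.Theory.
Local Open Scope ring_scope.

(* Setting: k field, G finite group, F group (possibly infinite, carried by a
   groupType of mathcomp's monoid library), ▷ = act, ◁ = ract. *)
Section HopfData.
Variables (k : fieldType) (G : finGroupType) (F : groupType).
Variables (act : G -> F -> F) (ract : G -> F -> G).
Variables (sigma : G -> F -> F -> k) (tau : G -> G -> F -> k).

Definition matched_pair : Prop :=
  [/\ (forall f, act 1%g f = f)
        /\ (forall g g' f, act (g * g')%g f = act g (act g' f)),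
      (forall g, ract g 1%g = g)
        /\ (forall g f f', ract g (f * f')%g = ract (ract g f) f'),
      (forall g f f', act g (f * f')%g = (act g f * act (ract g f) f')%g)
    & (forall g g' f, ract (g * g')%g f = (ract g (act g' f) * ract g' f)%g)].

Definition Hcocycle : Prop :=
  [/\ (forall g f f', sigma g f f' != 0) /\ (forall g g' f, tau g g' f != 0),
      (forall g f, sigma g 1%g f = 1 /\ sigma g f 1%g = 1)
        /\ (forall f f', sigma 1%g f f' = 1),
      (forall g f f' f'', sigma (ract g f) f' f'' * sigma g f (f' * f'')%g
                          = sigma g f f' * sigma g (f * f')%g f''),
      (forall g f, tau 1%g g f = 1 /\ tau g 1%g f = 1)
        /\ (forall g g', tau g g' 1%g = 1) /\
      (forall g g' g'' f, tau g g' (act g'' f) * tau (g * g')%g g'' f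
                          = tau g (g' * g'')%g f * tau g' g'' f)
    & (forall g g' f f',
          sigma (g * g')%g f f' * tau g g' (f * f')%g
          = sigma g (act g' f) (act (ract g' f) f') * sigma g' f f'
            * tau g g' f * tau (ract g (act g' f)) (ract g' f) f')].

(* Basis of H = k^G{}^tau #_sigma kF : b = (g, f) stands for p_g # f. *)
Definition Hbasis := (G * F)%type.

(* Coefficient of (p_{h1}#f1) ⊗ (p_{h2}#f2) in Δ(p_g#f0), read off from
   Δ(p_g#f) = Σ_x τ(gx^{-1},x;f) p_{gx^{-1}}#(x▷f) ⊗ p_x#f. *)
Definition Hcop (b b1 b2 : Hbasis) : k :=
  let: (g, f0) := b in let: (h1, f1) := b1 in let: (h2, f2) := b2 in
  if [&& f2 == f0, f1 == act h2 f0 & h1 == (g * h2^-1)%g]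
  then tau h1 h2 f0 else 0.

(* Antipode: S(p_g#f) = σ(g^{-1}; g▷f,(g▷f)^{-1})^{-1} τ(g^{-1},g;f)^{-1}
                         p_{(g◁f)^{-1}} # (g▷f)^{-1}.
   Hanti b b' = coefficient of the basis vector b' in S(b). *)
Definition Hanti (b b' : Hbasis) : k :=
  let: (g, f0) := b in
  if b' == ((ract g f0)^-1, (act g f0)^-1)%g
  then (sigma g^-1 (act g f0) (act g f0)^-1)^-1 * (tau g^-1 g f0)^-1
  else 0.

Definition inGf (f : F) (g : G) : bool := act g f == f.

(* A right k^{G_f}_{τ_f}-comodule structure on V = k^n (row vectors):
   ρ(v) = Σ_{g ∈ G_f} (v *m c g) ⊗ p_g  (c g = 0 for g ∉ G_f). *)
Definition Gf_comodule (f : F) (n : nat) (c : G -> 'M[k]_n) : Prop :=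
  [/\ (forall g, ~~ inGf f g -> c g = 0),
      c 1%g = 1%:M
    & (forall h x, inGf f h -> inGf f x ->
         c x *m c h = tau h x f *: c (h * x)%g)].

Definition simple_Gf_comodule (f : F) (n : nat) (c : G -> 'M[k]_n) : Prop :=
  Gf_comodule f c /\ (0 < n)%N /\
  (forall U : 'M[k]_n, (forall g, (U *m c g <= U)%MS) ->
      U == 0 \/ row_full U).

Section Induced.
Local Open Scope classical_set_scope.
Definition fsum (V : nmodType) (u : Hbasis -> V) : V :=
  \sum_(b \in [set: Hbasis]) u b.
End Induced.

Section Cotensor.
Variables (f : F) (n : nat) (c : G -> 'M[k]_n).

(* Elements of M ⊗ H, M = V ⊗ kf ≅ V, are written t = Σ_b t b ⊗ b with
   t : Hbasis -> 'rV_n of finite support. *)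
Definition finsupp (t : Hbasis -> 'rV[k]_n) : Prop :=
  exists s : seq Hbasis, forall b, b \notin s -> t b = 0.

(* t ∈ Ṽ = (V⊗kf) □_{H'_f} H : (ρ_M ⊗ id) t = (id ⊗ (π_f⊗id)Δ) t, compared on
   the basis (p_a#f1) ⊗ (p_x#f2), a ∈ G_f, of H'_f ⊗ H. *)
Definition inVt (t : Hbasis -> 'rV[k]_n) : Prop :=
  finsupp t /\
  forall (a x : G) (f1 f2 : F), inGf f a ->
    (if f1 == f then t (x, f2) *m c a else 0)
    = fsum (fun b => Hcop b (a, f1) (x, f2) *: t b).

(* Coaction of Ṽ: (id⊗Δ) t = Σ_{b2} (tco t b2) ⊗ b2 ∈ Ṽ ⊗ H. *)
Definition tco (t : Hbasis -> 'rV[k]_n) (b2 : Hbasis) : Hbasis -> 'rV[k]_n :=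
  fun b1 => fsum (fun b => Hcop b b1 b2 *: t b).

(* Ṽ^* = linear functionals on Ṽ: functions on the ambient space that are
   linear on Ṽ, two of them being equal when they agree on Ṽ. *)
Definition lin_on (phi : (Hbasis -> 'rV[k]_n) -> k) : Prop :=
  forall (a : k) t u, inVt t -> inVt u ->
    phi (fun b => a *: t b + u b) = a * phi t + phi u.

Definition agree (phi psi : (Hbasis -> 'rV[k]_n) -> k) : Prop :=
  forall t, inVt t -> phi t = psi t.

(* Dual coaction: ρ*(φ) = Σ_b (dco φ b) ⊗ b, where
   ⟨φ_0, t⟩ φ_1 = ⟨φ, t_0⟩ S(t_1). *)
Definition dco (phi : (Hbasis -> 'rV[k]_n) -> k) (b : Hbasis)
  : (Hbasis -> 'rV[k]_n) -> k :=
  fun t => fsum (fun b' => Hanti b' b * phi (tco t b')).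

Definition induced_selfdual : Prop :=
  exists Psi : (Hbasis -> 'rV[k]_n) -> ((Hbasis -> 'rV[k]_n) -> k),
    [/\ (forall t, inVt t -> lin_on (Psi t)),
        (forall (a : k) t u, inVt t -> inVt u ->
           agree (Psi (fun b => a *: t b + u b))
                 (fun w => a * Psi t w + Psi u w)),
        (forall t, inVt t -> agree (Psi t) (fun _ => 0) ->
           forall b, t b = 0),
        (forall phi, lin_on phi -> exists2 t, inVt t & agree phi (Psi t))
      & (forall t b, inVt t -> agree (Psi (tco t b)) (dco (Psi t) b))].

End Cotensor.
End HopfData.

From HB Require Import structures.
From mathcomp Require Import all_boot all_order all_algebra all_fingroup.
From mathcomp Require Import boolp classical_sets fsbigop.

Set Implicit Arguments.
Unset Strict Implicit.
Unset Printing Implicit Defensive.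

Import GRing.Theory.
Local Open Scope ring_scope.

(* Every element of the induced comodule V~ is a sum of terms v ⊗ p_x#f' with
   x ▷ f' = f, so the coaction of V~ only produces right tensor factors
   p_a#f' with f' in the orbit G ▷ f.  The antipode sends p_a#f' to a multiple
   of some p_b#(a ▷ f')^{-1}, hence the coaction of V~^* only produces factors
   p_b#f' with f'^{-1} in G ▷ f.  On the other hand, for 0 <> v in V the
   element t = Σ_x v c(x) ⊗ p_x#f of V~ is its own (p_1#f)-component under
   the coaction; a comodule isomorphism V~ ≅ V~^* transports this nonzero
   component to V~^*, so f^{-1} lies in G ▷ f. *)

Section FiniteSums.
Variables (G : finGroupType) (F : groupType) (V : nmodType).
Implicit Type u : Hbasis G F -> V.

Lemma fsum_supp1 b0 u : (forall b, b != b0 -> u b = 0) -> fsum u = u b0.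
Proof.
move=> u0; rewrite /fsum -(fsbig_widen [set b0] [set: Hbasis G F] u) //.
  by rewrite fsbig_set1.
by move=> b [_ /= /eqP]; apply: u0.
Qed.

Lemma fsum_neq0 u : fsum u != 0 -> exists b, u b != 0.
Proof.
apply: contraNP => /forallNP u0; rewrite /fsum fsbig1 // => b _.
by apply/eqP; apply: contra_notT id (u0 b).
Qed.

End FiniteSums.

Section InducedComodule.
Variables (k : fieldType) (G : finGroupType) (F : groupType).
Variables (act : G -> F -> F) (ract : G -> F -> G).
Variables (sigma : G -> F -> F -> k) (tau : G -> G -> F -> k).
Variables (f : F) (n : nat) (c : G -> 'M[k]_n).

Hypothesis act1 : forall f', act 1%g f' = f'.
Hypothesis actM : forall g g' f', act (g * g')%g f' = act g (act g' f').
Hypothesis tau1g : forall g f', tau 1%g g f' = 1.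
Hypothesis taug1 : forall g f', tau g 1%g f' = 1.

Local Notation inVt := (inVt act tau f c).
Local Notation tco := (tco act tau).

Lemma actK g : cancel (act g) (act g^-1).
Proof. by move=> f'; rewrite -actM mulVg act1. Qed.

Lemma inGf1 : inGf act f 1%g.
Proof. by rewrite /inGf act1. Qed.

Lemma inGf_mull a x : inGf act f a -> inGf act f (a * x)%g = inGf act f x.
Proof.
rewrite /inGf actM => /eqP fa.
by rewrite -{2}fa (inj_eq (can_inj (actK a))).
Qed.

Lemma fsum_Hcop (w : Hbasis G F -> 'rV[k]_n) a f1 x f2 :
  fsum (fun b => Hcop act tau b (a, f1) (x, f2) *: w b)
  = if f1 == act x f2 then tau a x f2 *: w ((a * x)%g, f2) else 0.
Proof.
rewrite (@fsum_supp1 _ _ _ ((a * x)%g, f2)) => [|[g f0]].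
  by rewrite /Hcop eqxx mulgK eqxx andbT /=; case: (f1 == _); rewrite ?scale0r.
rewrite /Hcop; case: (f2 =P f0) => [<- ne|_ _] /=; last by rewrite scale0r.
case: (f1 == act x f2) => /=; last by rewrite scale0r.
case: eqP => [ea|] /=; last by rewrite scale0r.
by move: ne; rewrite ea mulgVK eqxx.
Qed.

Lemma inVt0 : inVt (fun _ => 0).
Proof.
split=> [|a x f1 f2 _]; first by exists [::].
by rewrite fsum_Hcop mul0mx scaler0 !if_same.
Qed.

Lemma inVt_supp w x f' : inVt w -> w (x, f') != 0 -> act x f' = f.
Proof.
case=> _ /(_ 1%g x (act x f') f' inGf1).
rewrite fsum_Hcop eqxx tau1g scale1r mul1g.
by case: eqP => // _ <-; rewrite eqxx.
Qed.

Lemma lin_on0 phi : lin_on act tau f c phi -> phi (fun _ => 0) = 0.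
Proof.
move=> /(_ 1 _ _ inVt0 inVt0).
have -> : (fun b : Hbasis G F => 1 *: (0 : 'rV[k]_n) + 0) = (fun _ => 0).
  by apply: funext => b; rewrite scale1r addr0.
by rewrite mul1r => /esym/eqP; rewrite -subr_eq0 addrK => /eqP.
Qed.

(* The image of v under V ≅ V ⊗ kf -> V~, v |-> Σ_x v c(x) ⊗ p_x#f. *)
Definition induced_vec (v : 'rV[k]_n) (b : Hbasis G F) : 'rV[k]_n :=
  if b.2 == f then v *m c b.1 else 0.

Lemma inVt_induced_vec v : Gf_comodule act tau f c -> inVt (induced_vec v).
Proof.
case=> c0 _ cM; split=> [|a x f1 f2 fa].
  exists [seq (x, f) | x <- enum G] => -[x f'] /=; rewrite /induced_vec /=.
  by case: eqP => // ->; rewrite map_f ?mem_enum.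
rewrite fsum_Hcop /induced_vec /=.
case: (f2 =P f) => [->|_]; last by rewrite mul0mx scaler0 !if_same.
have [fx|fNx] := boolP (inGf act f x).
  by rewrite (eqP fx) -mulmxA cM // scalemxAr.
rewrite (c0 x) // (c0 (a * x)%g) ?inGf_mull //.
by rewrite !(mulmx0, mul0mx, scaler0) !if_same.
Qed.

Lemma tco_induced_vec v : tco (induced_vec v) (1%g, f) = induced_vec v.
Proof.
apply: funext => -[h f'].
by rewrite /tco fsum_Hcop act1 taug1 scale1r mulg1 /induced_vec /= eqxx.
Qed.

Lemma dco_neq0_orbit_inv phi w g0 f0 :
  lin_on act tau f c phi -> inVt w ->
  dco act ract sigma tau phi (g0, f0) w != 0 -> exists g, act g f = (f0^-1)%g.
Proof.
move=> phi_lin wVt /fsum_neq0 [[g f']]; rewrite /Hanti.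
case: ((g0, f0) =P _) => [[_ ->] | _]; last by rewrite mul0r eqxx.
move=> anti_nz; have phi_tco : phi (tco w (g, f')) != 0.
  by apply: contraNneq anti_nz => ->; rewrite mulr0.
have [[h f1]] : exists b, tco w (g, f') b != 0.
  apply/not_existsP => tco0; move: phi_tco.
  rewrite (_ : tco w (g, f') = fun _ => 0) ?lin_on0 ?eqxx //.
  by apply: funext => b; apply/eqP; apply: contra_notT id (tco0 b).
rewrite /tco fsum_Hcop; case: (f1 =P _) => _; last by rewrite eqxx.
move=> tco_nz; have /(inVt_supp wVt) hgf : w ((h * g)%g, f') != 0.
  by apply: contraNneq tco_nz => ->; rewrite scaler0.
by exists (g * (h * g)^-1)%g; rewrite -hgf -actM mulgVK invgK.
Qed.

End InducedComodule.

Theorem corollary5p7 (k : closedFieldType) (G : finGroupType) (F : groupType)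
  (act : G -> F -> F) (ract : G -> F -> G)
  (sigma : G -> F -> F -> k) (tau : G -> G -> F -> k)
  (f : F) (n : nat) (c : G -> 'M[k]_n) :
  [pchar k] =i pred0 ->
  matched_pair act ract ->
  Hcocycle act ract sigma tau ->
  simple_Gf_comodule act tau f c ->
  induced_selfdual act ract sigma tau f c ->
  exists g : G, act g f = (f^-1)%g.
Proof.
move=> _ [[act1 actM] _ _ _] [_ _ _ [tau_norm _] _] [cV [n_gt0 _]].
move=> [Psi [Psi_lin _ Psi_inj _ Psi_co]].
have tau1g g f' : tau 1%g g f' = 1 by case: (tau_norm g f').
have taug1 g f' : tau g 1%g f' = 1 by case: (tau_norm g f').
pose v : 'rV[k]_n := const_mx 1.
pose t := induced_vec f c v.
have tVt : inVt act tau f c t by apply: inVt_induced_vec.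
have t_neq0 : ~ (forall b, t b = 0).
  have [_ c1 _] := cV.
  move/(_ (1%g, f)); rewrite /t /induced_vec /= eqxx c1 mulmx1.
  by move/matrixP/(_ 0 (Ordinal n_gt0)); rewrite !mxE; apply/eqP/oner_neq0.
have [w wVt Psi_tw] : exists2 w, inVt act tau f c w & Psi t w != 0.
  apply: contra_notP t_neq0 => noW; apply: Psi_inj => // w wVt.
  by apply/eqP; apply: contra_notT noW => ?; exists w.
move: Psi_tw; rewrite -[t in Psi t](tco_induced_vec f c act1 taug1) Psi_co //.
apply: (dco_neq0_orbit_inv act1 actM tau1g (Psi_lin t tVt) wVt).
Qed.
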